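(* Let $R$ be a non-degenerate $n$-ary relation on a domain $\mathcal{D}$ with $n\ge2$. Then $\mathrm{ter}(R)\ge n-2$. In particular, every non-degenerate ternary relation is bond irreducible. If moreover $|R|\le|\mathcal{D}|$, then $\mathrm{ter}(R)=n-2$. In particular, $\mathrm{ter}(R)=n-2$ for all such (non-degenerate, $n\ge2$) relations on infinite domains $\mathcal{D}$.
   Context: Relations are attributed: $R\subseteq\mathcal{D}^\Sigma$, $\Sigma$ finite, arity $n=|\Sigma|$; $\pi_\Gamma$ restricts tuples to $\Gamma$; the join of $R_i\subseteq\mathcal{D}^{\Lambda_i}$ is $\{a\in\mathcal{D}^{\cup\Lambda_i}:a|_{\Lambda_i}\in R_i\ \forall i\}$. $R$ is degenerate if there is a partition $\Sigma=\Lambda_1\cup\dots\cup\Lambda_m$ with $m>1$, all $\Lambda_i\neq\emptyset$, and $R^{\Lambda_i}\subseteq\mathcal{D}^{\Lambda_i}$ with $R=\{a:a|_{\Lambda_i}\in R^{\Lambda_i}\ \forall i\}$. Bonds: relations $R_i\subseteq\mathcal{D}^{\Lambda_i}$ are bondable if no attribute lies in three or more $\Lambda_i$; their bond is $\pi_\Gamma[R_1\Join\dots\Join R_m]$, $\Gamma$ the set of attributes lying in exactly one $\Lambda_i$. $R$ is bond reducible if it is a bond of factors $R_i\subseteq\mathcal{D}^{\Lambda_i}$ with $0<|\Lambda_i|<|\Sigma|$, otherwise bond irreducible. A bond is subternaric if all factors have arity $\le3$. The ternarity $\mathrm{ter}(R)$ is the minimal number of factors of arity $3$ over all representations of $R$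 as a subternaric bond (a relation of arity $\le3$ counts as a one-factor bond of itself), and $\infty$ if none exists. *)

(* Attributes are natural numbers; a tuple is a
   total assignment a : nat -> D, and a relation R ⊆ D^Σ is represented by a
   predicate on assignments that only depends on the values at attributes in Σ
   (see [supported]).  Two assignments represent the same Σ-tuple iff they
   [agree] on Σ. *)
From Stdlib Require List.
From mathcomp Require Import all_boot.
Set Implicit Arguments. Unset Strict Implicit. Unset Printing Implicit Defensive.

Section Relations.
Variable D : Type.

Definition assignment := nat -> D.

Definition agree (S : seq nat) (a b : assignment) : Prop :=
  forall x, x \in S -> a x = b x.

Definition supported (S : seq nat) (P : assignment -> Prop) : Prop :=
  forall a b, agree S a b -> P a -> P b.

Definition is_relation (S : seq nat) (P : assignment -> Prop) : Prop :=
  uniq S /\ supported S P.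

Definition factor := (seq nat * (assignment -> Prop))%type.

Definition all_relations (Fs : seq factor) : Prop :=
  forall F, List.In F Fs -> is_relation F.1 F.2.

Definition occ (Fs : seq factor) (x : nat) : nat :=
  count (fun F : factor => x \in F.1) Fs.

Definition bondable (Fs : seq factor) : Prop :=
  forall x, occ Fs x <= 2.

Definition bond_attrs (Fs : seq factor) : seq nat :=
  undup [seq x <- flatten [seq F.1 | F <- Fs] | occ Fs x == 1].

Definition bond_pred (Fs : seq factor) (a : assignment) : Prop :=
  exists b : assignment, agree (bond_attrs Fs) a b /\
    (forall F, List.In F Fs -> F.2 b).

Definition is_bond_of (S : seq nat) (R : assignment -> Prop) (Fs : seq factor)
  : Prop :=
  all_relations Fs /\ bondable Fs /\
  (forall x, (x \in bond_attrs Fs) = (x \in S)) /\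
  (forall a, R a <-> bond_pred Fs a).

Definition bond_reducible (S : seq nat) (R : assignment -> Prop) : Prop :=
  exists Fs, is_bond_of S R Fs /\
    (forall F, List.In F Fs -> 0 < size F.1 < size S).

Definition bond_irreducible (S : seq nat) (R : assignment -> Prop) : Prop :=
  ~ bond_reducible S R.

Definition degenerate (S : seq nat) (R : assignment -> Prop) : Prop :=
  exists Fs : seq factor,
    1 < size Fs /\ all_relations Fs /\
    (forall F, List.In F Fs -> F.1 != [::]) /\
    (forall F, List.In F Fs -> {subset F.1 <= S}) /\
    (forall x, x \in S -> occ Fs x = 1) /\
    (forall a, R a <-> (forall F, List.In F Fs -> F.2 a)).

Definition subternaric (Fs : seq factor) : Prop :=
  forall F, List.In F Fs -> size F.1 <= 3.

Definition num_ternary (Fs : seq factor) : nat :=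
  count (fun F : factor => size F.1 == 3) Fs.

Definition subternaric_bond_of S R Fs : Prop :=
  is_bond_of S R Fs /\ subternaric Fs.

(* ter(R) >= k  (vacuously true when ter(R) = ∞) *)
Definition ter_ge (S : seq nat) (R : assignment -> Prop) (k : nat) : Prop :=
  forall Fs, subternaric_bond_of S R Fs -> k <= num_ternary Fs.

Definition ter_eq (S : seq nat) (R : assignment -> Prop) (k : nat) : Prop :=
  ter_ge S R k /\
  exists Fs, subternaric_bond_of S R Fs /\ num_ternary Fs = k.

Definition card_rel_le_dom (S : seq nat) (R : assignment -> Prop) : Prop :=
  exists f : assignment -> D,
    forall a b, R a -> R b -> f a = f b -> agree S a b.

End Relations.

Definition infinite_type (T : Type) : Prop :=
  ~ exists s : list T, forall x : T, List.In x s.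

From mathcomp Require Import all_boot zify.
From mathcomp Require Import boolp classical_sets functions.
From Stdlib Require Import Permutation.
Set Implicit Arguments. Unset Strict Implicit. Unset Printing Implicit Defensive.

(* Lower bound: two factors of a bond sharing a hidden attribute can be merged
   into their own bond without increasing the excess, the sum over the factors
   of (arity - 2).  Once no attribute is hidden, R is the product of the
   factors, so non-degeneracy leaves a single factor carrying all n
   attributes; for a subternaric bond the excess counts the ternary factors.

   Upper bound: an injection c of R into D writes R as a path of factors
   {(t x1, c t)}, {(t x2, c t, c t)}, ..., {(t xn, c t)} glued along hidden
   copies of c t, with n - 2 ternary factors.  On an infinite domain such an
   injection comes from a pairing D * D -> D (Hessenberg), iterated along the
   tuple. *)

Lemma In_mem (T : eqType) (s : seq T) x : List.In x s <-> x \in s.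
Proof.
elim: s => //= y s IH; rewrite in_cons; split.
  by case=> [->|/IH ->]; rewrite ?eqxx ?orbT.
by case/orP => [/eqP ->|/IH]; [left|right].
Qed.

Lemma In_count_gt0 (T : Type) (p : pred T) s x : List.In x s -> p x -> 0 < count p s.
Proof.
elim: s => //= y s IH [<- ->|/IH h /h] //; lia.
Qed.

Lemma count_gt0_cat_cons (T : Type) (p : pred T) s : 0 < count p s ->
  exists s1 y s2, s = s1 ++ y :: s2 /\ p y.
Proof.
elim: s => //= y s IH; case py: (p y) => /= h; first by exists [::], y, s.
have [s1 [z [s2 [-> pz]]]] := IH h.
by exists (y :: s1), z, s2.
Qed.

Lemma Permutation_count (T : Type) (p : pred T) s t :
  Permutation s t -> count p s = count p t.
Proof. by elim=> //= [x l l' _ -> | x y l | l l' l'' _ -> _ ->] //; rewrite addnCA. Qed.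

Lemma Permutation_sumn s t : Permutation s t -> sumn s = sumn t.
Proof. by elim=> //= [x l l' _ -> | x y l | l l' l'' _ -> _ ->] //; rewrite addnCA. Qed.

Lemma count_lt_size (T : eqType) (p : pred T) s x : x \in s -> ~~ p x ->
  count p s < size s.
Proof.
move=> xs npx; rewrite -(count_predC p s).
suff : 0 < count (predC p) s by lia.
by rewrite -has_count; apply/hasP; exists x.
Qed.

Section Bonds.
Variable D : Type.
Local Notation assignment := (assignment D).
Local Notation factor := (factor D).
Implicit Types (Fs : seq factor) (F : factor) (a b : assignment)
  (R : assignment -> Prop) (S : seq nat).

Lemma agree_sym S a b : agree S a b -> agree S b a.
Proof. by move=> h x /h. Qed.

Lemma agree_trans S a b c : agree S a b -> agree S b c -> agree S a c.
Proof. by move=> h1 h2 x hx; rewrite h1 // h2. Qed.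

Lemma agree_sub S1 S2 a b : {subset S2 <= S1} -> agree S1 a b -> agree S2 a b.
Proof. by move=> h1 h2 x /h1 /h2. Qed.

Lemma In_occ_gt0 Fs F x : List.In F Fs -> x \in F.1 -> 0 < occ Fs x.
Proof. exact: (In_count_gt0 (p := fun F : factor => x \in F.1)). Qed.

Lemma occ_cons F Fs x : occ (F :: Fs) x = (x \in F.1) + occ Fs x.
Proof. by []. Qed.

Lemma occ_cat Fs1 Fs2 x : occ (Fs1 ++ Fs2) x = occ Fs1 x + occ Fs2 x.
Proof. exact: count_cat. Qed.

Lemma occ_perm Fs Fs' x : Permutation Fs Fs' -> occ Fs x = occ Fs' x.
Proof. exact: Permutation_count. Qed.

Lemma mem_flatten_attrs Fs x :
  (x \in flatten [seq F.1 | F <- Fs]) = (0 < occ Fs x).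
Proof.
rewrite /occ; elim: Fs => //= F Fs IH.
by rewrite mem_cat IH; case: (x \in F.1).
Qed.

Lemma mem_bond_attrs Fs x : (x \in bond_attrs Fs) = (occ Fs x == 1).
Proof.
rewrite /bond_attrs mem_undup mem_filter mem_flatten_attrs.
by case: eqP => // ->.
Qed.

Lemma bond_pred_supported Fs : supported (bond_attrs Fs) (bond_pred Fs).
Proof.
move=> a a' haa' [b [hab hF]]; exists b; split => //.
exact: agree_trans (agree_sym haa') hab.
Qed.

Lemma bond_pred_perm Fs Fs' a :
  Permutation Fs Fs' -> bond_pred Fs a -> bond_pred Fs' a.
Proof.
move=> hp [b [hab hF]]; exists b; split.
  by apply: agree_sub hab => x; rewrite !mem_bond_attrs (occ_perm _ hp).
by move=> F /(Permutation_in _ (Permutation_sym hp)) /hF.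
Qed.

Lemma is_bond_perm S R Fs Fs' :
  Permutation Fs Fs' -> is_bond_of S R Fs -> is_bond_of S R Fs'.
Proof.
move=> hp [hr [hb [hm hR]]]; split; last split; last split.
- by move=> F /(Permutation_in _ (Permutation_sym hp)) /hr.
- by move=> x; rewrite -(occ_perm _ hp).
- by move=> x; rewrite -hm !mem_bond_attrs (occ_perm _ hp).
- move=> a; split; first by move/hR/(bond_pred_perm hp).
  by move=> /(bond_pred_perm (Permutation_sym hp)) /hR.
Qed.

Lemma bond_pred1 F a : is_relation F.1 F.2 -> bond_pred [:: F] a <-> F.2 a.
Proof.
case=> _ hs; split; last by move=> h; exists a; split => // G [<-|].
case=> b [hab /(_ F (or_introl erefl)) hb]; apply: hs hb.
by apply: agree_sym; apply: agree_sub hab => x hx; rewrite mem_bond_attrs /occ /= hx.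
Qed.

(* The glued witness follows b1 on the attributes of Fs1 and b2 elsewhere: an
   attribute shared by the two parts occurs once in each, so b1 and b2 both agree
   with b there. *)
Lemma bond_pred_cat Fs1 Fs2 a :
  all_relations (Fs1 ++ Fs2) -> bondable (Fs1 ++ Fs2) ->
  bond_pred (Fs1 ++ Fs2) a <->
  exists b, [/\ agree (bond_attrs (Fs1 ++ Fs2)) a b, bond_pred Fs1 b & bond_pred Fs2 b].
Proof.
move=> hrel hbd; split.
  case=> b [hab hF]; exists b; split => //; exists b; split => // F hF'.
    by apply: hF; apply: List.in_or_app; left.
  by apply: hF; apply: List.in_or_app; right.
case=> b [hab [b1 [hb1 hF1]] [b2 [hb2 hF2]]].
pose b12 y := if 0 < occ Fs1 y then b1 y else b2 y.
exists b12; split.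
  move=> y; rewrite mem_bond_attrs occ_cat => hy.
  rewrite /b12 hab ?mem_bond_attrs ?occ_cat //.
  by case: ifP => h1; [rewrite hb1|rewrite hb2] => //; rewrite mem_bond_attrs; lia.
move=> F hF0; have [_ hs] := hrel F hF0; case: (List.in_app_or _ _ _ hF0) => hF.
  by apply: hs (hF1 F hF) => y hy; rewrite /b12 (In_occ_gt0 hF hy).
apply: hs (hF2 F hF) => y hy; rewrite /b12; case: ifP => // h1.
have h2 := In_occ_gt0 hF hy; have := hbd y; rewrite occ_cat => hle.
by rewrite -hb1 ?hb2 // mem_bond_attrs; lia.
Qed.

Lemma bond_pred_cons F Fs a : all_relations (F :: Fs) -> bondable (F :: Fs) ->
  bond_pred (F :: Fs) a <->
  exists b, [/\ agree (bond_attrs (F :: Fs)) a b, F.2 b & bond_pred Fs b].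
Proof.
move=> hr hb; have hF := bond_pred1 _ (hr F (or_introl erefl)).
rewrite (@bond_pred_cat [:: F] Fs a hr hb).
by split=> -[b [hab h1 h2]]; exists b; split => //; apply/hF.
Qed.

Lemma is_bond_merge2 S R F F' Fs : is_bond_of S R (F :: F' :: Fs) ->
  is_bond_of S R ((bond_attrs [:: F; F'], bond_pred [:: F; F']) :: Fs).
Proof.
move=> [hr [hb [hm hR]]]; set F'' := (bond_attrs _, _).
have occ2 y : occ [:: F; F'] y <= 2 by exact: (count_size _ [:: F; F']).
have occ_old y : occ (F :: F' :: Fs) y = occ [:: F; F'] y + occ Fs y
  by exact: (occ_cat [:: F; F'] Fs y).
have occ_new y : occ (F'' :: Fs) y = (occ [:: F; F'] y == 1) + occ Fs y.
  by rewrite -mem_bond_attrs.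
have hb' : bondable (F'' :: Fs).
  by move=> y; have := hb y; have := occ2 y; rewrite occ_old occ_new; case: eqP; lia.
have hm' y : (y \in bond_attrs (F'' :: Fs)) = (y \in bond_attrs (F :: F' :: Fs)).
  rewrite !mem_bond_attrs occ_old occ_new; have := hb y; have := occ2 y.
  by rewrite occ_old; case: eqP; lia.
have hr' : all_relations (F'' :: Fs).
  move=> G [<-|hG]; last by apply: hr; right; right.
  by split; [exact: undup_uniq | exact: bond_pred_supported].
split => //; split => //; split; first by move=> y; rewrite hm' hm.
move=> a; have eq_agree b : agree (bond_attrs ([:: F''] ++ Fs)) a b <->
                  agree (bond_attrs ([:: F; F'] ++ Fs)) a b.
  by split; apply: agree_sub => y; rewrite /= hm'.
rewrite hR (@bond_pred_cat [:: F; F'] Fs a hr hb) (@bond_pred_cat [:: F''] Fs a hr' hb').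
split=> -[b [hab h1 h2]]; exists b; split => //.
- by apply/eq_agree.
- by apply/bond_pred1 => //; apply: hr'; left.
- by apply/eq_agree.
- by apply/(bond_pred1 _ (hr' _ (or_introl erefl))).
Qed.

Lemma size_bond_attrs2 F F' x : x \in F.1 -> x \in F'.1 ->
  size (bond_attrs [:: F; F']) + 2 <= size F.1 + size F'.1.
Proof.
move=> xF xF'; rewrite /bond_attrs.
apply: leq_trans (leq_add (size_undup _) (leqnn 2)) _.
have -> : flatten [seq G.1 | G <- [:: F; F']] = F.1 ++ F'.1 by rewrite /= cats0.
rewrite size_filter count_cat.
have px : ~~ (occ [:: F; F'] x == 1) by rewrite /occ /= xF xF'.
rewrite addn2 -addnS -addSn.
by apply: leq_add; [exact: count_lt_size xF px | exact: count_lt_size xF' px].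
Qed.

Lemma occ2_Permutation Fs x : occ Fs x = 2 ->
  exists F F' Fs', [/\ x \in F.1, x \in F'.1 & Permutation Fs (F :: F' :: Fs')].
Proof.
move=> hx; have [L1 [F [L2 [eFs xF]]]] := count_gt0_cat_cons (ltac:(lia) : 0 < occ Fs x).
have hx1 : occ (L1 ++ L2) x = 1 by move: hx; rewrite eFs !occ_cat /occ /= xF; lia.
have [M1 [F' [M2 [eL xF']]]] := count_gt0_cat_cons (ltac:(lia) : 0 < occ (L1 ++ L2) x).
exists F, F', (M1 ++ M2); split => //; rewrite eFs.
apply: Permutation_trans (Permutation_sym (Permutation_middle _ _ _)) _.
apply: perm_skip; change (Permutation (L1 ++ L2) (F' :: M1 ++ M2)).
by rewrite eL; exact: Permutation_sym (Permutation_middle _ _ _).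
Qed.

Lemma bond_without_hidden S R Fs : is_bond_of S R Fs -> (forall x, occ Fs x != 2) ->
  [/\ forall F, List.In F Fs -> {subset F.1 <= S},
      forall x, x \in S -> occ Fs x = 1 &
      forall a, R a <-> forall F, List.In F Fs -> F.2 a].
Proof.
move=> [hr [hbd [hm hR]]] nohid.
have visible F y : List.In F Fs -> y \in F.1 -> y \in S.
  move=> hF hy; rewrite -hm mem_bond_attrs.
  by have := In_occ_gt0 hF hy; have := hbd y; have := nohid y; lia.
split; first by move=> F hF y; exact: visible.
  by move=> x; rewrite -hm mem_bond_attrs => /eqP.
move=> a; rewrite hR; split; last by move=> h; exists a.
case=> b [hab hF] F hF'; have [_ hs] := hr F hF'.
apply: hs (hF F hF') => y hy; symmetry; apply: hab.
by rewrite hm; exact: visible hF' hy.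
Qed.

End Bonds.

Section LowerBound.
Variable D : Type.
Local Notation assignment := (assignment D).
Local Notation factor := (factor D).
Implicit Types (Fs : seq factor) (F : factor) (a b : assignment)
  (R : assignment -> Prop) (S : seq nat).

Definition excess Fs := sumn [seq size F.1 - 2 | F <- Fs].

Lemma excess_perm Fs Fs' : Permutation Fs Fs' -> excess Fs = excess Fs'.
Proof. by move=> hp; apply: Permutation_sumn; apply: Permutation_map. Qed.

Lemma excess_ge_In Fs F : List.In F Fs -> size F.1 - 2 <= excess Fs.
Proof. by rewrite /excess; elim: Fs => //= G Fs IH [<-|/IH]; lia. Qed.

Lemma excess_subternaric Fs : subternaric Fs -> excess Fs = num_ternary Fs.
Proof.
rewrite /excess /num_ternary; elim: Fs => //= F Fs IH h.
rewrite IH; last by move=> G hG; apply: h; right.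
by have := h F (or_introl erefl); case: (size F.1 == 3) /eqP => [-> //|]; lia.
Qed.

Lemma excess_eq0 Fs : (forall F, List.In F Fs -> size F.1 <= 2) -> excess Fs = 0.
Proof.
rewrite /excess; elim: Fs => //= F Fs IH h.
rewrite IH => [|G hG]; last by apply: h; right.
by have := h F (or_introl erefl); lia.
Qed.

Lemma empty_degenerate S R : uniq S -> 2 <= size S -> (forall a, ~ R a) ->
  degenerate S R.
Proof.
move=> uS hS hR; exists [seq ([:: y], fun _ : assignment => False) | y <- S].
split; first by rewrite size_map.
split; first by move=> F /List.in_map_iff [y [<- _]]; split => // a b _ [].
split; first by move=> F /List.in_map_iff [y [<- _]].
split.
  by move=> F /List.in_map_iff [y [<- /In_mem yS]] z; rewrite inE => /eqP ->.
split.
  move=> x xS; rewrite /occ count_map.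
  have <- : count (pred1 x) S = 1 by rewrite (count_uniq_mem x uS) xS.
  by apply: eq_count => y /=; rewrite inE eq_sym.
move=> a; split => [/hR []|].
case: S uS hS => // y S' _ _ /(_ ([:: y], fun _ => False)) [].
by left.
Qed.

(* Factors without attributes are constant, so they can be dropped from a
   nonempty product; a single remaining factor must carry every attribute. *)
Lemma nondegenerate_product S R Fs :
  is_relation S R -> 2 <= size S -> ~ degenerate S R -> all_relations Fs ->
  (forall F, List.In F Fs -> {subset F.1 <= S}) ->
  (forall x, x \in S -> occ Fs x = 1) ->
  (forall a, R a <-> forall F, List.In F Fs -> F.2 a) ->
  exists2 F, List.In F Fs & {subset S <= F.1}.
Proof.
move=> [uS _] hS hnd hr hsub hocc hR.
have [[a0 Ra0]|nR] := pselect (exists a, R a); last first.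
  by case: hnd; apply: empty_degenerate => // a Ra; apply: nR; exists a.
set Fs1 := filter (fun F : factor => F.1 != [::]) Fs.
have hocc1 x : x \in S -> occ Fs1 x = 1.
  move=> /hocc <-; rewrite /occ /Fs1 count_filter.
  by apply: eq_count => -[[|y l] P] /=; rewrite ?andbT.
have hR1 a : R a <-> forall F, List.In F Fs1 -> F.2 a.
  rewrite hR; split => h F; first by move/List.filter_In => [hF _]; exact: h.
  move=> hF; have [e|ne] := eqVneq F.1 [::].
    have [_ hs] := hr F hF; apply: hs ((hR a0).1 Ra0 F hF) => y.
    by rewrite e.
  by apply: h; apply/List.filter_In.
case: (ltnP 1 (size Fs1)) => hs1.
  case: hnd; exists Fs1; split => //; split.
    by move=> F /List.filter_In [hF _]; exact: hr.
  split; first by move=> F /List.filter_In [].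
  by split => // F /List.filter_In [hF _]; exact: hsub.
have [y yS] : exists y, y \in S by case: (S) hS => // y ? _; exists y; rewrite mem_head.
have := hocc1 y yS; case E: Fs1 hs1 => [|F [|? ?]] // _ _.
exists F; first by have /List.filter_In [] : List.In F Fs1 by rewrite E; left.
by move=> z /hocc1; rewrite E /occ /=; case: (z \in F.1).
Qed.

Lemma excess_bond_ge S R Fs : is_relation S R -> 2 <= size S -> ~ degenerate S R ->
  is_bond_of S R Fs -> size S - 2 <= excess Fs.
Proof.
move=> hSR hS hnd; have [n] := ubnP (size Fs); elim: n Fs => // n IH Fs hsz hB.
have [[x /occ2_Permutation [F [F' [Fs' [xF xF' hp]]]]]|nohid] :=
  pselect (exists x, occ Fs x = 2).
  have hB' := is_bond_merge2 (is_bond_perm hp hB).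
  have pos (G : factor) : x \in G.1 -> 0 < size G.1 by case: (G.1).
  have := IH _ _ hB'; have := size_bond_attrs2 xF xF'; have := pos _ xF.
  have := pos _ xF'; have : size Fs = size (F :: F' :: Fs') := Permutation_length hp.
  by move: hsz; rewrite (excess_perm hp) /excess /=; lia.
have no_hidden x : occ Fs x != 2 by apply/eqP => e; apply: nohid; exists x.
have [hsub hocc hR] := bond_without_hidden hB no_hidden.
have [F hF hSF] := nondegenerate_product hSR hS hnd hB.1 hsub hocc hR.
have hle : size S <= size F.1 by exact: uniq_leq_size hSR.1 hSF.
by have := excess_ge_In hF; lia.
Qed.

End LowerBound.

Section PathBond.
Variables (D : Type) (S : seq nat) (R : assignment D -> Prop) (c : assignment D -> D).
Hypothesis c_inj : forall a b, R a -> R b -> c a = c b -> agree S a b.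
Local Notation assignment := (assignment D).
Local Notation factor := (factor D).
Implicit Types (a b t : assignment) (L : seq nat).

Definition trace (x u : nat) : assignment -> Prop :=
  fun a => exists t, [/\ R t, c t = a u & t x = a x].

Definition link (x u : nat) : factor :=
  ([:: x; u; u.+1], fun a => trace x u a /\ a u.+1 = a u).

Fixpoint chain L (u : nat) : seq factor :=
  match L with
  | [::] => [::]
  | [:: x] => [:: ([:: x; u], trace x u)]
  | x :: L' => link x u :: chain L' u.+1
  end.

Lemma trace_relation x u : x < u -> is_relation [:: x; u] (trace x u).
Proof.
move=> xu; split; first by rewrite /= inE andbT neq_ltn xu.
move=> a b hab [t [Rt e1 e2]]; exists t.
by split => //; rewrite -hab ?inE ?eqxx ?orbT.
Qed.

Lemma link_relation x u : x < u -> is_relation (link x u).1 (link x u).2.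
Proof.
move=> xu; split.
  by rewrite /= !inE negb_or; apply/and3P; split => //=; apply/negP; lia.
move=> a b hab [[t [Rt e1 e2]] e3].
by split; [exists t; split => //|]; rewrite -!hab ?inE ?eqxx ?orbT.
Qed.

Lemma chain_relations L u : (forall x, x \in L -> x < u) -> all_relations (chain L u).
Proof.
elim: L u => [|x [|x' L'] IH] u lt F //=.
- by case=> [<-|[]]; apply: trace_relation; apply: lt; rewrite mem_head.
- case=> [<-|]; first by apply: link_relation; apply: lt; rewrite mem_head.
  by apply: IH => y hy; apply: leqW; apply: lt; rewrite inE hy orbT.
Qed.

Lemma num_ternary_chain L u : num_ternary (chain L u) = (size L).-1.
Proof.
by elim: L u => [|x [|x' L'] IH] u //=; rewrite /num_ternary /= -/(num_ternary _) IH.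
Qed.

Lemma subternaric_chain L u : subternaric (chain L u).
Proof.
elim: L u => [|x [|x' L'] IH] u F //=; first by case=> [<-|[]].
by case=> [<-|/IH].
Qed.

Lemma occ_chain L u : L != [::] -> uniq L -> (forall x, x \in L -> x < u) ->
  forall y, occ (chain L u) y = (y \in L) + (y == u) + ((u < y) && (y < u + size L)) * 2.
Proof.
elim: L u => [|x [|x' L'] IH] u // _.
  by move=> _ lt y; have := lt x (mem_head _ _); rewrite /occ /= !inE; lia.
move=> /andP [xL' uL'] lt y.
have ltL z : z \in x' :: L' -> z < u by move=> hz; apply: lt; rewrite inE hz orbT.
have xu := lt x (mem_head _ _).
rewrite -[chain _ u]/(link x u :: chain (x' :: L') u.+1) occ_cons.
rewrite (IH u.+1 isT uL'); last by move=> z /ltL; lia.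
have -> : (y \in (link x u).1) = [|| y == x, y == u | y == u.+1] by rewrite !inE.
rewrite [y \in x :: _]in_cons; case: (eqVneq y x) => [->|_] /=.
  by rewrite (negbTE xL'); lia.
by case yL: (y \in x' :: L'); [have := ltL y yL|]; lia.
Qed.

Lemma bondable_chain L u : L != [::] -> uniq L -> (forall x, x \in L -> x < u) ->
  bondable (chain L u).
Proof.
move=> nL uL lt y; rewrite occ_chain //.
by case yL: (y \in L); [have := lt y yL|]; lia.
Qed.

Lemma mem_bond_attrs_chain L u : L != [::] -> uniq L -> (forall x, x \in L -> x < u) ->
  forall y, (y \in bond_attrs (chain L u)) = (y \in L) || (y == u).
Proof.
move=> nL uL lt y; rewrite mem_bond_attrs occ_chain //.
by case yL: (y \in L); [have := lt y yL|]; lia.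
Qed.

Lemma bond_pred_chain L u : L != [::] -> uniq L -> {subset L <= S} ->
  (forall x, x \in L -> x < u) ->
  forall a, bond_pred (chain L u) a <-> exists t, [/\ R t, c t = a u & agree L t a].
Proof.
elim: L u => [|x [|x' L'] IH] u // _.
  move=> _ _ lt a; rewrite bond_pred1; last first.
    by apply: trace_relation; apply: lt; rewrite mem_head.
  split; case=> t [Rt e1 e2]; exists t; split => //; last exact: e2 (mem_head _ _).
  by move=> y; rewrite inE => /eqP ->.
set L1 := x' :: L'; move=> uL sub lt a.
have [_ uL1] := andP uL.
have ltL y : y \in L1 -> y < u by move=> hy; apply: lt; rewrite inE hy orbT.
have subL1 : {subset L1 <= S} by move=> y hy; apply: sub; rewrite inE hy orbT.
have hbond := IH u.+1 isT uL1 subL1 (fun y hy => leqW (ltL y hy)).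
have memG := @mem_bond_attrs_chain (x :: L1) u isT uL lt.
rewrite -[chain _ u]/(link x u :: chain L1 u.+1) in memG *.
rewrite bond_pred_cons; [|exact: chain_relations lt|exact: bondable_chain lt].
split.
  case=> b [hab [[t [Rt e1 e2]] e3] /hbond [t' [Rt' e4 e5]]].
  have htt := c_inj Rt Rt' (etrans e1 (etrans (esym e3) (esym e4))).
  exists t; split => //; first by rewrite e1 hab // memG eqxx orbT.
  move=> y; rewrite inE => /orP [/eqP ->|yL]; first by rewrite e2 hab // memG mem_head.
  rewrite htt; last by apply: sub; rewrite inE yL orbT.
  by rewrite e5 // hab // memG inE yL orbT.
case=> t [Rt e1 e2]; pose b y := if y == u.+1 then a u else a y.
have bu : b u = a u by rewrite /b (ltn_eqF (ltnSn u)).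
have bL y : y \in x :: L1 -> b y = a y.
  by move=> /lt yu; rewrite /b; case: eqP => // e; move: yu; rewrite e; lia.
exists b; split.
- by move=> y; rewrite memG => /orP [/bL|/eqP ->] //.
- split; last by rewrite bu /b eqxx.
  by exists t; split; rewrite ?bu ?bL ?mem_head // e2 ?mem_head.
- apply/hbond; exists t; split => //; first by rewrite /b eqxx.
  move=> y yL; have yxL : y \in x :: L1 by rewrite inE yL orbT.
  by rewrite bL // e2.
Qed.

Definition trace_path (s1 : nat) L u : seq factor :=
  ([:: s1; u], trace s1 u) :: chain L u.

Lemma occ_trace_path s1 L u : L != [::] -> uniq (s1 :: L) ->
  (forall x, x \in s1 :: L -> x < u) ->
  forall y, occ (trace_path s1 L u) y =
            (y \in s1 :: L) + (y == u) * 2 + ((u < y) && (y < u + size L)) * 2.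
Proof.
move=> nL /andP [s1L uL] lt y.
have ltL z : z \in L -> z < u by move=> zL; apply: lt; rewrite inE zL orbT.
rewrite occ_cons occ_chain // !inE; case: (eqVneq y s1) => [->|_] /=.
  by have := lt s1 (mem_head _ _); rewrite (negbTE s1L); lia.
by case yL: (y \in L); [have := ltL y yL|]; lia.
Qed.

Lemma is_bond_trace_path s1 L u : S = s1 :: L -> L != [::] -> is_relation S R ->
  (forall x, x \in S -> x < u) -> is_bond_of S R (trace_path s1 L u).
Proof.
move=> ES nL [uS sR] lt; rewrite ES in uS lt.
have [_ uL] := andP uS.
have ltL y : y \in L -> y < u by move=> yL; apply: lt; rewrite inE yL orbT.
have hocc := occ_trace_path nL uS lt.
have hr : all_relations (trace_path s1 L u).
  move=> G [<-|]; last exact: chain_relations.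
  by apply: trace_relation; apply: lt; rewrite mem_head.
have hbd : bondable (trace_path s1 L u).
  by move=> y; rewrite hocc; case yS: (y \in s1 :: L); [have := lt y yS|]; lia.
have memG y : (y \in bond_attrs (trace_path s1 L u)) = (y \in S).
  by rewrite ES mem_bond_attrs hocc; case yS: (y \in s1 :: L); [have := lt y yS|]; lia.
split => //; split => //; split => // a; rewrite bond_pred_cons //.
have subL : {subset L <= S} by move=> y yL; rewrite ES inE yL orbT.
have hL := bond_pred_chain nL uL subL ltL.
split.
  move=> Ra; pose b y := if y == u then c a else a y.
  have bS y : y \in s1 :: L -> b y = a y.
    by move=> /lt yu; rewrite /b; case: eqP => // e; move: yu; rewrite e; lia.
  exists b; split; first by move=> y; rewrite memG ES => /bS.
    exists a; split => //; first by rewrite /b eqxx.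
    by rewrite bS ?mem_head.
  apply/hL; exists a; split => //; first by rewrite /b eqxx.
  by move=> y yL; rewrite bS // inE yL orbT.
case=> b [hab [t [Rt e1 e2]] /hL [t' [Rt' e4 e5]]].
have htt := c_inj Rt Rt' (etrans e1 (esym e4)).
apply: sR Rt => y; rewrite ES inE => /orP [/eqP ->|yL].
  by rewrite e2 hab // memG ES mem_head.
have yS : y \in S by rewrite ES inE yL orbT.
by rewrite htt // e5 // hab // memG.
Qed.

Lemma trace_path_bond : is_relation S R -> 2 <= size S ->
  exists Fs, subternaric_bond_of S R Fs /\ num_ternary Fs = size S - 2.
Proof.
move=> hSR hS; set u := (\max_(y <- S) y).+1.
have ltS y : y \in S -> y < u.
  by move=> yS; rewrite ltnS; exact: (leq_bigmax_seq (F := id) _ yS isT).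
case ES: S hS => [|s1 L] // hS; have nL : L != [::] by case: (L) hS.
exists (trace_path s1 L u); split; first split.
- by rewrite -ES; apply: is_bond_trace_path; rewrite -?ES.
- by move=> G [<-|/subternaric_chain].
rewrite [num_ternary _]/= num_ternary_chain /=.
by case: (L) nL => // ? ? _; lia.
Qed.

End PathBond.

Local Open Scope classical_set_scope.

Definition injective_graph (T U : Type) (H : set (T * U)) :=
  (forall x y y', H (x, y) -> H (x, y') -> y = y') /\
  (forall x x' y, H (x, y) -> H (x', y) -> x = x').

Definition pairing_on (T : Type) (A : set T) (f : T -> T -> T) :=
  (forall x y, A x -> A y -> A (f x y)) /\
  (forall x y x' y', A x -> A y -> A x' -> A y' -> f x y = f x' y' -> x = x' /\ y = y').

Definition two_points (T : Type) (A : set T) := exists a0 a1, [/\ A a0, A a1 & a0 <> a1].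

Lemma chain_ub (T : Type) (F : set (set T)) X1 X2 :
  total_on F subset -> F X1 -> F X2 -> exists X, [/\ F X, X1 `<=` X & X2 `<=` X].
Proof.
by move=> htot h1 h2; case: (htot _ _ h1 h2) => h; [exists X2 | exists X1]; split.
Qed.

Lemma injective_graph_bigcup (T U : Type) (F : set (set (T * U))) :
  F `<=` @injective_graph T U -> total_on F subset ->
  injective_graph (\bigcup_(X in F) X).
Proof.
move=> hF htot; split.
- move=> x y y' [X1 h1 t1] [X2 h2 t2]; have [X [hX s1 s2]] := chain_ub htot h1 h2.
  exact: (hF _ hX).1 (s1 _ t1) (s2 _ t2).
- move=> x x' y [X1 h1 t1] [X2 h2 t2]; have [X [hX s1 s2]] := chain_ub htot h1 h2.
  exact: (hF _ hX).2 (s1 _ t1) (s2 _ t2).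
Qed.

(* Cardinal comparability, via a maximal partial injection from A to B. *)
Lemma inj_comparable (T : Type) (t0 : T) (A B : set T) :
  (exists f, set_fun A B f /\ set_inj A f) \/ (exists g, set_fun B A g /\ set_inj B g).
Proof.
have [H [[[Hfun Hinj] HAB] maxH]] :
    exists H, (injective_graph H /\ H `<=` A `*` B) /\
              forall H', H `<` H' -> ~ (injective_graph H' /\ H' `<=` A `*` B).
  apply: Zorn_bigcup => F hF htot; split.
    by apply: injective_graph_bigcup htot => X /hF [].
  by move=> p [X /hF [_ sub]]; apply: sub.
have [totH|/existsNP [a /not_implyP [Aa /forallNP na]]] :=
  pselect (forall a, A a -> exists b, H (a, b)).
  left; have /choice [f hf] : forall a, exists b, A a -> H (a, b).
    by move=> a; have [/totH [b hb]|na] := pselect (A a); [exists b | exists t0].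
  exists f; split; first by move=> a Aa; exact: (HAB _ (hf a Aa)).2.
  by move=> x y /set_mem Ax /set_mem Ay e; apply: Hinj (hf x Ax) _; rewrite e; exact: hf.
right; have ontoH b : B b -> exists a', H (a', b).
  move=> Bb; apply: contrapT => /forallNP nb.
  apply: (maxH (H `|` [set (a, b)])).
    by split; [exact: subsetUl | move=> /(_ (a, b) (or_intror erefl)) /na].
  split; last by move=> p [/HAB //|->].
  split.
  - move=> x y y' [h1|[ex ey]] [h2|[ex' ey']]; subst => //; first exact: Hfun h1 h2.
    + by case: (na _ h1).
    + by case: (na _ h2).
  - move=> x x' y [h1|[ex ey]] [h2|[ex' ey']]; subst => //; first exact: Hinj h1 h2.
    + by case: (nb _ h1).
    + by case: (nb _ h2).
have /choice [g hg] : forall b, exists a', B b -> H (a', b).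
  by move=> b; have [/ontoH [a' ha]|nb] := pselect (B b); [exists a' | exists t0].
exists g; split; first by move=> b Bb; exact: (HAB _ (hg b Bb)).1.
by move=> x y /set_mem Bx /set_mem By e; apply: Hfun (hg x Bx) _; rewrite e; exact: hg.
Qed.

Section PairingGraphs.
Variable T : Type.
Implicit Types (G : set ((T * T) * T)) (A : set T).

Definition graph_dom G x := exists z, G ((x, x), z).

(* Two
   distinct points of the domain serve as tags when the domain is doubled in
   [pairing_graph_double]; the empty graph is allowed so that unions of chains
   stay in the class. *)
Definition pairing_graph G :=
  [/\ injective_graph G,
      forall x y z, G ((x, y), z) -> [/\ graph_dom G x, graph_dom G y & graph_dom G z],
      forall x y, graph_dom G x -> graph_dom G y -> exists z, G ((x, y), z) &
      (forall t, ~ G t) \/ two_points (graph_dom G)].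

Lemma graph_dom_sub G G' : G `<=` G' -> graph_dom G `<=` graph_dom G'.
Proof. by move=> h x [z hz]; exists z; apply: h. Qed.

Lemma pairing_graph_bigcup (F : set (set ((T * T) * T))) :
  F `<=` pairing_graph -> total_on F subset -> pairing_graph (\bigcup_(X in F) X).
Proof.
move=> hF htot; have sub X : F X -> X `<=` \bigcup_(X in F) X by move=> h t ht; exists X.
split.
- by apply: injective_graph_bigcup htot => X /hF [].
- move=> x y z [X hX t]; have [_ closed _ _] := hF _ hX.
  by have [? ? ?] := closed _ _ _ t; split; apply: (graph_dom_sub (sub _ hX)).
- move=> x y [z1 [X1 h1 t1]] [z2 [X2 h2 t2]]; have [X [hX s1 s2]] := chain_ub htot h1 h2.
  have [_ _ total _] := hF _ hX.
  have [z hz] := total x y (ex_intro _ z1 (s1 _ t1)) (ex_intro _ z2 (s2 _ t2)).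
  by exists z, X.
- have [[t [X hX tX]]|nt] := pselect (exists t, (\bigcup_(X in F) X) t); last first.
    by left => t ht; apply: nt; exists t.
  have [_ _ _ [/(_ t tX) []|[a0 [a1 [d0 d1 n01]]]]] := hF _ hX.
  by right; exists a0, a1; split => //; apply: (graph_dom_sub (sub _ hX)).
Qed.

Definition image_graph (U : Type) (P : set U) (phi : U -> T) (c : U -> U -> U) :
  set ((T * T) * T) :=
  fun t => exists p q, [/\ P p, P q & t = ((phi p, phi q), phi (c p q))].

Lemma graph_dom_image_graph (U : Type) (P : set U) phi c :
  graph_dom (image_graph P phi c) = phi @` P.
Proof.
apply/seteqP; split => [x [z [p [q [Pp _ [-> _ _]]]]]|_ [p Pp <-]]; first by exists p.
by exists (phi (c p p)), p, p.
Qed.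

Lemma image_pairing_graph (U : Type) (P : set U) phi c :
  set_inj P phi -> pairing_on P c -> two_points P ->
  pairing_graph (image_graph P phi c).
Proof.
move=> phi_inj [cP c_inj] [a0 [a1 [P0 P1 n01]]].
have inj p q : P p -> P q -> phi p = phi q -> p = q.
  by move=> Pp Pq; apply: phi_inj; apply: mem_set.
rewrite /pairing_graph graph_dom_image_graph; split.
- split.
  + move=> _ z z' [p [q [Pp Pq [-> ->]]]] [p' [q' [Pp' Pq' [e1 e2 ->]]]].
    by rewrite (inj _ _ Pp Pp' e1) (inj _ _ Pq Pq' e2).
  + move=> _ _ z [p [q [Pp Pq [-> ->]]]] [p' [q' [Pp' Pq' [-> e]]]].
    have {}e := inj _ _ (cP _ _ Pp Pq) (cP _ _ Pp' Pq') e.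
    by have [-> ->] := c_inj _ _ _ _ Pp Pq Pp' Pq' e.
- move=> x y z [p [q [Pp Pq [-> -> ->]]]].
  by split; [exists p | exists q | exists (c p q); first exact: cP].
- by move=> _ _ [p Pp <-] [q Pq <-]; exists (phi (c p q)), p, q.
- right; exists (phi a0), (phi a1); split; [exists a0 | exists a1 |] => //.
  by move=> e; apply: n01; apply: (inj _ _ _ _ e).
Qed.

Lemma pairing_of_graph G : pairing_graph G ->
  exists f, pairing_on (graph_dom G) f /\
            forall x y z, G ((x, y), z) -> z = f x y.
Proof.
move=> [[Gfun Ginj] closed total _].
have /choice [f hf] : forall p : T * T, exists z,
    graph_dom G p.1 -> graph_dom G p.2 -> G (p, z).
  case=> x y; have [[hx hy]|n] := pselect (graph_dom G x /\ graph_dom G y).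
    by have [z hz] := total x y hx hy; exists z.
  by exists x => hx hy; case: n.
have Gf x y : graph_dom G x -> graph_dom G y -> G ((x, y), f (x, y)) := hf (x, y).
exists (fun x y => f (x, y)); split; first split.
- by move=> x y hx hy; have [_ _] := closed _ _ _ (Gf x y hx hy).
- move=> x y x' y' hx hy hx' hy' e; have g := Gf x y hx hy; rewrite e in g.
  by case: (Ginj _ _ _ g (Gf x' y' hx' hy')).
- move=> x y z g; have [hx hy _] := closed _ _ _ g.
  exact: Gfun g (Gf x y hx hy).
Qed.

Section Doubling.
Variables (A : set T) (f : T -> T -> T) (g : T -> T) (a0 a1 : T).
Hypothesis f_pairing : pairing_on A f.
Hypotheses (g_fun : set_fun A (~` A) g) (g_inj : set_inj A g).
Hypotheses (A0 : A a0) (A1 : A a1) (n01 : a0 <> a1).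

(* The tagged copy (true, x) of x stands for g x.  A pair involving a copy is
   coded in the copy of A, after prefixing its two tags with f. *)
Let P : set (bool * T) := fun p => A p.2.
Let untag (p : bool * T) := if p.1 then g p.2 else p.2.
Let tag (b : bool) := if b then a1 else a0.

Let double (p q : bool * T) : bool * T :=
  if p.1 || q.1 then (true, f (tag p.1) (f (tag q.1) (f p.2 q.2)))
  else (false, f p.2 q.2).

Let untag_inj : set_inj P untag.
Proof.
move=> [[] x] [[] y] /set_mem Ax /set_mem Ay; rewrite /untag /= => e.
- by congr pair; apply: g_inj; rewrite ?inE.
- by case: (g_fun Ax); rewrite e.
- by case: (g_fun Ay); rewrite -e.
- by rewrite e.
Qed.

Let double_pairing : pairing_on P double.
Proof.
have [fA f_inj] := f_pairing.
have tagA b : A (tag b) by case: b.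
have tag_inj b d : tag b = tag d -> b = d by case: b; case: d => // /esym.
split.
  move=> [b x] [b' y]; rewrite /P /double /= => Ax Ay.
  have fAxy := fA x y Ax Ay.
  by case: (b || b') => /=; [exact: fA (tagA _) (fA _ _ (tagA _) fAxy) | exact: fAxy].
move=> [b x] [b' y] [d x'] [d' y']; rewrite /P /double /= => Ax Ay Ax' Ay'.
case E: (b || b'); case E': (d || d') => // -[e].
  have fAxy := fA x y Ax Ay; have fAxy' := fA x' y' Ax' Ay'.
  have [/tag_inj -> e1] := f_inj _ _ _ _ (tagA _) (fA _ _ (tagA _) fAxy)
    (tagA _) (fA _ _ (tagA _) fAxy') e.
  have [/tag_inj -> e2] := f_inj _ _ _ _ (tagA _) fAxy (tagA _) fAxy' e1.
  by have [-> ->] := f_inj _ _ _ _ Ax Ay Ax' Ay' e2.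
have [-> ->] := f_inj _ _ _ _ Ax Ay Ax' Ay' e.
by move: E E'; case: b; case: b'; case: d; case: d'.
Qed.

Lemma pairing_graph_double : exists G',
  [/\ pairing_graph G', forall x y, A x -> A y -> G' ((x, y), f x y) &
      exists2 x, graph_dom G' x & ~ A x].
Proof.
exists (image_graph P untag double); split.
- apply: image_pairing_graph untag_inj double_pairing _.
  by exists (false, a0), (false, a1); split => // -[].
- by move=> x y Ax Ay; exists (false, x), (false, y).
- exists (g a0); last exact: g_fun A0.
  by rewrite graph_dom_image_graph; exists (true, a0).
Qed.

End Doubling.

Lemma pairing_of_compl_inj A f k a0 a1 : pairing_on A f -> A a0 -> A a1 -> a0 <> a1 ->
  set_fun (~` A) A k -> set_inj (~` A) k -> exists e : T -> T -> T, injective2 e.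
Proof.
move=> [fA f_inj] A0 A1 n01 kA k_inj.
pose h d := if pselect (A d) is left _ then f a0 d else f a1 (k d).
have hA d : A (h d) by rewrite /h; case: pselect => Ad; apply: fA => //; exact: kA.
have h_inj d d' : h d = h d' -> d = d'.
  rewrite /h; case: pselect => Ad; case: pselect => Ad' e.
  - by have [_ ->] := f_inj _ _ _ _ A0 Ad A0 Ad' e.
  - by have [/n01] := f_inj _ _ _ _ A0 Ad A1 (kA _ Ad') e.
  - by have [/esym/n01] := f_inj _ _ _ _ A1 (kA _ Ad) A0 Ad' e.
  - have [_ e'] := f_inj _ _ _ _ A1 (kA _ Ad) A1 (kA _ Ad') e.
    by apply: k_inj e'; apply: mem_set.
exists (fun x y => f (h x) (h y)) => x x' y y' e.
by have [/h_inj -> /h_inj ->] := f_inj _ _ _ _ (hA x) (hA y) (hA x') (hA y') e.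
Qed.

End PairingGraphs.

Section InfiniteType.
Variable D : Type.
Hypothesis infD : infinite_type D.

Lemma infinite_type_fresh (s : list D) : exists x, ~ List.In x s.
Proof.
apply: contrapT => h; apply: infD; exists s => x.
by apply: contrapT => hx; apply: h; exists x.
Qed.

Let fresh (s : list D) : D := projT1 (cid (infinite_type_fresh s)).

Let freshP s : ~ List.In (fresh s) s.
Proof. exact: projT2 (cid (infinite_type_fresh s)). Qed.

Fixpoint fresh_list (n : nat) : list D :=
  if n is n'.+1 then fresh (fresh_list n') :: fresh_list n' else nil.

Lemma infinite_type_nat_inj : exists i : nat -> D, injective i.
Proof.
pose i n := fresh (fresh_list n).
have old m n : m < n -> List.In (i m) (fresh_list n).
  elim: n => // n IH; rewrite ltnS leq_eqVlt => /orP [/eqP ->|/IH]; [left|right] => //.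
exists i => m n e; case: (ltngtP m n) => // /old; [rewrite e | rewrite -e] => /freshP [].
Qed.

(* Hessenberg: a maximal pairing graph has a domain A that cannot be doubled,
   so the complement of A injects into A, which transports the pairing to D. *)
Theorem infinite_type_pairing : exists e : D -> D -> D, injective2 e.
Proof.
have [i i_inj] := infinite_type_nat_inj.
have [G [hG maxG]] := Zorn_bigcup (@pairing_graph_bigcup D).
have G0 : pairing_graph (image_graph [set: nat] i (fun m n => pickle (m, n))).
  apply: image_pairing_graph; last by exists 0, 1.
  - by move=> m n _ _; exact: i_inj.
  - by split=> // m n m' n' _ _ _ _ /(pcan_inj pickleK) [-> ->].
have [_ G_closed _ [G_empty|[a0 [a1 [A0 A1 n01]]]]] := hG.
  case: (maxG _ _ G0); split; first by move=> t /G_empty.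
  move=> sub; apply: (G_empty ((i 0, i 0), i (pickle (0, 0)))); apply: sub.
  by exists 0, 0.
have [f [f_pairing Gf]] := pairing_of_graph hG.
case: (inj_comparable a0 (graph_dom G) (~` graph_dom G)) =>
    [[g [g_fun g_inj]]|[k [k_fun k_inj]]].
- have [G' [hG' G'f [x domx nAx]]] :=
    pairing_graph_double f_pairing g_fun g_inj A0 A1 n01.
  case: (maxG G' _ hG'); split; last by move=> /graph_dom_sub /(_ x domx).
  move=> [[x' y'] z] Gxyz; have [hx hy _] := G_closed _ _ _ Gxyz.
  by rewrite (Gf _ _ _ Gxyz); exact: G'f.
- exact: pairing_of_compl_inj f_pairing A0 A1 n01 k_fun k_inj.
Qed.

End InfiniteType.

Lemma foldr_pairing_inj (T : Type) (t0 : T) (e : T -> T -> T) : injective2 e ->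
  forall s1 s2, size s1 = size s2 -> foldr e t0 s1 = foldr e t0 s2 -> s1 = s2.
Proof. by move=> e_inj; elim=> [|x s1 IH] [|y s2] //= [hs] /e_inj [-> /IH ->]. Qed.

Lemma pairing_card_rel_le_dom (D : Type) (S : seq nat) (R : assignment D -> Prop)
    (d0 : D) (e : D -> D -> D) : injective2 e -> card_rel_le_dom S R.
Proof.
move=> e_inj; exists (fun a => foldr e d0 (map a S)) => a b _ _ hab.
have /eq_in_map h : map a S = map b S.
  by apply: foldr_pairing_inj e_inj _ _ _ hab; rewrite !size_map.
by move=> x /h.
Qed.

Theorem theorem43 (D : Type) (S : seq nat) (R : assignment D -> Prop) :
  is_relation S R -> 2 <= size S -> ~ degenerate S R ->
  ter_ge S R (size S - 2) /\
  (size S = 3 -> bond_irreducible S R) /\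
  (card_rel_le_dom S R -> ter_eq S R (size S - 2)) /\
  (infinite_type D -> ter_eq S R (size S - 2)).
Proof.
move=> hSR hS hnd.
have ter_lb : ter_ge S R (size S - 2).
  by move=> Fs [hB hsub]; rewrite -excess_subternaric //; exact: excess_bond_ge hB.
have ter_exact : card_rel_le_dom S R -> ter_eq S R (size S - 2).
  by case=> c c_inj; split => //; exact: trace_path_bond c_inj hSR hS.
split => //; split.
  move=> S3 [Fs [hB hsz]]; have := excess_bond_ge hSR hS hnd hB.
  by rewrite excess_eq0 ?S3 // => F /hsz; rewrite S3; lia.
split => // infD; apply: ter_exact.
have [e e_inj] := infinite_type_pairing infD.
have [d0 _] := infinite_type_fresh infD nil.
exact: (@pairing_card_rel_le_dom D S R d0 e e_inj).
Qed.
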